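(* Suppose that for every $c\in\{1,\dots,K-1\}$ the density $\bar p_c$ satisfies $$\bar p_c(\bm x,\bar Y)=\binom{K-1}{c}^{-1}\sum_{y\notin \bar Y}p(\bm x,y)\qquad(\bm x\in\mathcal X,\ \bar Y\in\overline{\mathcal Y}_c).$$ Let $\bm\alpha=(\alpha_1,\dots,\alpha_{K-1})$ satisfy $\alpha_c\ge 0$ and $\sum_{c=1}^{K-1}\alpha_c=1$. Define the multi-complementary risk $$R_{\mathrm{MCL}}(\bm g)=\sum_{c=1}^{K-1}\alpha_c R_c(\bm g),\qquad R_c(\bm g)=\mathbb E_{\bar p_c(\bm x,\bar Y)}\Big[\mathcal L(\bm g(\bm x))-\frac{K-1}{c}\sum_{y\in\bar Y}\ell(\bm g(\bm x),y)\Big].$$ Then for any loss $\ell$ and any decision function $\bm g$ (with finite expectations), $R_{\mathrm{MCL}}(\bm g)=R(\bm g)$.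
   Context: Let $K\ge 2$, $\mathcal X\subseteq\mathbb R^d$ the feature space and $\mathcal Y=\{1,\dots,K\}$ the label space. Let $p(\bm x,y)$ be a joint density on $\mathcal X\times\mathcal Y$ with marginal density $p(\bm x)$. For $c\in\{1,\dots,K-1\}$, $\overline{\mathcal Y}_c$ denotes the collection of all $c$-element subsets of $\{1,\dots,K\}$, and $\bar p_c(\bm x,\bar Y)$ is a density on $\mathcal X\times\overline{\mathcal Y}_c$. A decision function is a map $\bm g:\mathcal X\to\mathbb R^K$, a loss is a function $\ell:\mathbb R^K\times\mathcal Y\to[0,\infty)$, the classification risk is $R(\bm g)=\mathbb E_{p(\bm x,y)}[\ell(\bm g(\bm x),y)]$, and the cumulative loss is $\mathcal L(\bm g(\bm x))=\sum_{y=1}^K\ell(\bm g(\bm x),y)$. *)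

From HB Require Import structures.
From mathcomp Require Import all_boot all_order all_algebra.
Set Implicit Arguments. Unset Strict Implicit. Unset Printing Implicit Defensive.
Import Order.TTheory GRing.Theory Num.Theory.
Local Open Scope ring_scope.

(* Labels {1,...,K} are represented by 'I_K = {0,...,K-1}; features by
   row vectors 'rV[R]_d.  [I] is the integration functional over the
   feature space X (f |-> \int_X f(x) dx). *)

Section Defs.
Variables (R : realFieldType) (d K : nat).
Notation feat := 'rV[R]_d.

Definition cumloss (l : 'rV[R]_K -> 'I_K -> R) (v : 'rV[R]_K) : R :=
  \sum_(y : 'I_K) l v y.

Definition expect_p (I : (feat -> R) -> R) (p : feat -> 'I_K -> R)
  (f : feat -> 'I_K -> R) : R :=
  I (fun x => \sum_(y : 'I_K) p x y * f x y).

Definition expect_pbar (I : (feat -> R) -> R)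
  (pbar : nat -> feat -> {set 'I_K} -> R) (c : nat)
  (f : feat -> {set 'I_K} -> R) : R :=
  I (fun x => \sum_(Y : {set 'I_K} | #|Y| == c) pbar c x Y * f x Y).

Definition risk I p (l : 'rV[R]_K -> 'I_K -> R) (g : feat -> 'rV[R]_K) : R :=
  expect_p I p (fun x y => l (g x) y).

Definition risk_c I pbar (c : nat) (l : 'rV[R]_K -> 'I_K -> R)
  (g : feat -> 'rV[R]_K) : R :=
  expect_pbar I pbar c (fun x Y =>
    cumloss l (g x) - ((K - 1)%:R / c%:R) * \sum_(y in Y) l (g x) y).

Definition risk_MCL I pbar (alpha : nat -> R) l g : R :=
  \sum_(1 <= c < K) alpha c * risk_c I pbar c l g.

End Defs.

From Stdlib Require Import FunctionalExtensionality.
From HB Require Import structures.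
From mathcomp Require Import all_boot all_order all_algebra.
Import Order.TTheory GRing.Theory Num.Theory.
Local Open Scope ring_scope.

(* Fix a label y and sum the bracket of R_c over the c-sets Y avoiding y.
   There are C(K-1, c) of them, and each other label lies in C(K-2, c-1) of
   them; since (K-1)/c * C(K-2, c-1) = C(K-1, c), the sum is C(K-1, c) times
   L - sum_{y' <> y} l(y') = l(y).  The weight 1/C(K-1, c) of pbar_c cancels
   this factor, so the integrand of R_c equals that of R pointwise. *)

Lemma card_draws_mem (T : finType) (B : {set T}) (y : T) (c : nat) :
  y \in B ->
  #|[set Y : {set T} | [&& Y \subset B, #|Y| == c.+1 & y \in Y]]| =
  'C(#|B|.-1, c).
Proof.
move=> yB; set S := [set Y : {set T} | (Y \subset B) && (#|Y| == c.+1)].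
have := cardsID [set Y : {set T} | y \in Y] S.
have -> : S :&: [set Y : {set T} | y \in Y] =
          [set Y : {set T} | [&& Y \subset B, #|Y| == c.+1 & y \in Y]].
  by apply/setP => Y; rewrite !inE andbA.
have -> : S :\: [set Y : {set T} | y \in Y] =
          [set Y : {set T} | (Y \subset B :\ y) && (#|Y| == c.+1)].
  apply/setP => Y; rewrite !inE subsetD1 andbC -!andbA.
  by congr (_ && _); rewrite andbC.
rewrite cards_draws /S cards_draws (cardsD1 y B) yB add1n binS addnC.
by move/addnI.
Qed.

Lemma sum_sum_mem_set (R : nmodType) (T : finType) (P : pred {set T})
    (F : T -> R) :
  \sum_(Y | P Y) \sum_(y in Y) F y =
  \sum_y F y *+ #|[set Y | P Y && (y \in Y)]|.
Proof.
under eq_bigr do rewrite big_mkcond.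
rewrite exchange_big; apply: eq_bigr => y _.
rewrite -big_mkcondr -sumr_const; apply: eq_bigl => Y.
by rewrite inE.
Qed.

Lemma sum_draws_sum (R : nmodType) (T : finType) (B : {set T}) (c : nat)
    (F : T -> R) :
  \sum_(Y : {set T} | (Y \subset B) && (#|Y| == c.+1)) \sum_(y in Y) F y =
  (\sum_(y in B) F y) *+ 'C(#|B|.-1, c).
Proof.
rewrite sum_sum_mem_set (bigID (mem B)) /= -sumrMnl.
rewrite [X in _ + X]big1 ?addr0 => [|y yNB].
  apply: eq_bigr => y yB; rewrite -(@card_draws_mem T B y c yB).
  by congr (_ *+ _); apply: eq_card => Y; rewrite !inE andbA.
rewrite -[RHS](mulr0n (F y)); congr (_ *+ _).
apply/eqP; rewrite cards_eq0; apply/eqP/setP => Y; rewrite !inE.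
apply/negbTE; apply: contra yNB => /andP[/andP[sYB _] yY].
exact: subsetP sYB y yY.
Qed.

Lemma complementary_bracket_sum (R : realFieldType) (T : finType) (c : nat)
    (y : T) (L : T -> R) :
  (0 < c)%N ->
  \sum_(Y : {set T} | (#|Y| == c) && (y \notin Y))
     (\sum_y' L y' - ((#|T| - 1)%:R / c%:R) * \sum_(y' in Y) L y') =
  ('C(#|T| - 1, c))%:R * L y.
Proof.
case: c => // c _; set B := [set~ y].
have cardB : #|B| = (#|T| - 1)%N by rewrite cardsC1 subn1.
have avoid_y (Y : {set T}) :
    (#|Y| == c.+1) && (y \notin Y) = (Y \subset B) && (#|Y| == c.+1).
  by rewrite /B subsetC sub1set inE andbC.
rewrite (eq_bigl _ _ avoid_y) sumrB sumr_const -mulr_sumr sum_draws_sum.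
rewrite (eq_card (B := [set Y : {set T} | (Y \subset B) && (#|Y| == c.+1)]));
  last by move=> Y; rewrite inE.
rewrite cards_draws cardB (bigD1 y) //=.
have sumB : \sum_(y' in B) L y' = \sum_(y' | y' != y) L y'.
  by apply: eq_bigl => y'; rewrite !inE.
have binomial_ratio : (#|T| - 1)%:R / c.+1%:R * 'C((#|T| - 1).-1, c)%:R =
                      'C(#|T| - 1, c.+1)%:R :> R.
  rewrite mulrAC -natrM mul_bin_diag natrM mulrC mulKf //.
  by rewrite pnatr_eq0.
rewrite sumB -[_ *+ 'C(_, c.+1)]mulr_natr -[_ *+ 'C(_, c)]mulr_natr.
by rewrite mulrCA binomial_ratio mulrDl addrK mulrC.
Qed.

Lemma complementary_integrand (R : realFieldType) (T : finType) (c : nat)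
    (P L : T -> R) :
  (1 <= c < #|T|)%N ->
  \sum_(Y : {set T} | #|Y| == c)
     ('C(#|T| - 1, c))%:R^-1 * (\sum_(y | y \notin Y) P y) *
     (\sum_y L y - ((#|T| - 1)%:R / c%:R) * \sum_(y in Y) L y) =
  \sum_y P y * L y.
Proof.
case/andP=> c_gt0 c_lt.
have binom_neq0 : ('C(#|T| - 1, c))%:R != 0 :> R.
  by rewrite pnatr_eq0 -lt0n bin_gt0 leq_subRL ?addn1 // (leq_trans _ c_lt).
under eq_bigr => Y _ do rewrite -mulrA mulr_suml.
rewrite -mulr_sumr; under eq_bigr do rewrite big_mkcond.
rewrite exchange_big mulr_sumr; apply: eq_bigr => y _.
rewrite -big_mkcondr -mulr_sumr complementary_bracket_sum //.
by rewrite mulrCA mulKf.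
Qed.

Theorem theorem1 (R : realFieldType) (d K : nat) (hK : (2 <= K)%N)
  (I : ('rV[R]_d -> R) -> R)
  (integrable : ('rV[R]_d -> R) -> Prop)
  (int_add : forall f h, integrable f -> integrable h ->
     integrable (fun x => f x + h x))
  (int_scale : forall (a : R) f, integrable f -> integrable (fun x => a * f x))
  (I_add : forall f h, integrable f -> integrable h ->
     I (fun x => f x + h x) = I f + I h)
  (I_scale : forall (a : R) f, integrable f -> I (fun x => a * f x) = a * I f)
  (p : 'rV[R]_d -> 'I_K -> R) (p_ge0 : forall x y, 0 <= p x y)
  (pbar : nat -> 'rV[R]_d -> {set 'I_K} -> R)
  (pbar_def : forall (c : nat) x (Y : {set 'I_K}), (1 <= c < K)%N -> #|Y| = c ->
     pbar c x Y = ('C(K - 1, c))%:R^-1 * \sum_(y : 'I_K | y \notin Y) p x y)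
  (alpha : nat -> R)
  (alpha_ge0 : forall c, (1 <= c < K)%N -> 0 <= alpha c)
  (alpha_sum : \sum_(1 <= c < K) alpha c = 1)
  (l : 'rV[R]_K -> 'I_K -> R) (l_ge0 : forall v y, 0 <= l v y)
  (g : 'rV[R]_d -> 'rV[R]_K)
  (fin_risk : integrable (fun x => \sum_(y : 'I_K) p x y * l (g x) y))
  (fin_risk_c : forall c, (1 <= c < K)%N ->
     integrable (fun x => \sum_(Y : {set 'I_K} | #|Y| == c) pbar c x Y *
        (cumloss l (g x) - ((K - 1)%:R / c%:R) * \sum_(y in Y) l (g x) y))) :
  risk_MCL I pbar alpha l g = risk I p l g.
Proof.
(* Each R_c equals R already at the level of integrands. *)
have risk_cE c : (1 <= c < K)%N -> risk_c I pbar c l g = risk I p l g.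
  move=> c_range; congr (I _); apply: functional_extensionality => x.
  have := @complementary_integrand R 'I_K c (p x) (l (g x)).
  rewrite card_ord => <- //.
  by apply: eq_bigr => Y /eqP cardY; rewrite pbar_def.
rewrite /risk_MCL; under eq_big_nat => c c_range do rewrite risk_cE //.
by rewrite -mulr_suml alpha_sum mul1r.
Qed.
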